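(* Assume $\lambda d(1-s^d_i)>\gamma$ for all $d,i$. For $x^*\in\mathcal{X}$, let $\Theta^*=\bar\Theta(x^* )>0$. Then $\partial H/\partial\Theta(\Theta^*,x^* )<0$, so there is an open neighborhood $N\subset\mathbb{R}^n$ of $x^*$ and a unique continuously differentiable $h:N\to(0,\infty)$ with $h(x^* )=\Theta^*$ and $H(h(y),y)=0$ for $y\in N$. Define $F^d_i(y)=s^d_i r-(1-s^d_i)\frac{\theta^d_i h(y)}{\gamma+\theta^d_i h(y)}$ on $N$. Then the game is submodular at $x^*$ in the sense that for all $d,c\in\{1,\dots,D\}$, all $k\in\{1,\dots,n^d-1\}$ and all $l\in\{1,\dots,n^c-1\}$, $$\frac{\partial F^d_{k+1}}{\partial x^c_{l+1}}(x^* )-\frac{\partial F^d_{k}}{\partial x^c_{l+1}}(x^* )-\frac{\partial F^d_{k+1}}{\partial x^c_{l}}(x^* )+\frac{\partial F^d_{k}}{\partial x^c_{l}}(x^* )\le 0,$$ i.e. $(\Sigma^d)^T DF^d_c(x^* )\Sigma^c\le0$ entrywise, where $DF^d_c=(\partial F^d_i/\partial x^c_j)_{i,j}\in\mathbb{R}^{n^d\times n^c}$ and $\Sigma^d\in\mathbb{R}^{n^d\times(n^d-1)}$ has columns $e_{k+1}-e_k$.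
   Context: Setting: $D\in\mathbb{N}_+$ populations indexed by degree $d\in\{1,\dots,D\}$, degree distribution $m^d\in(0,1]$, $\sum_d m^d=1$, $\bar d=\sum_d d\,m^d$. Population $d$ has strategies $0\le s^d_1<\dots<s^d_{n^d}\le1$ (strictly increasing), $n=\sum_d n^d$. A social state is $x=(x^d_i)$ with $x^d_i\ge0$, $\sum_i x^d_i=m^d$; $\mathcal{X}$ is the set of social states. Constants $\lambda>0,\gamma>0$, $\theta^d_i=\lambda d(1-s^d_i)$, relative reward $r<0$. Define $H:\mathbb{R}\times\mathbb{R}^n\to\mathbb{R}$ (where $\gamma+\theta^d_i\Theta\neq0$) by $H(\Theta,x)=\frac{1}{\bar d}\sum_d d\sum_i\frac{x^d_i\theta^d_i}{\gamma+\theta^d_i\Theta}-1$. For $x\in\mathcal{X}$, $\bar\Theta(x)$ denotes the unique $\Theta>0$ with $H(\Theta,x)=0$ (the link-infection probability at the positive steady state of the SI dynamics $\dot I^d_i=-\gamma I^d_i+\lambda(1-s^d_i)(1-I^d_i)d\Theta$, $\Theta=\bar d^{-1}\sum_d\sum_i dx^d_iI^d_i$), and the steady-state payoff is $F^d_i(x)=s^d_ir-(1-s^d_i)\frac{\theta^d_i\bar\Theta(x)}{\gamma+\theta^d_i\bar\Theta(x)}$. *)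

From HB Require Import structures.
From mathcomp Require Import all_boot all_order all_algebra.
From mathcomp Require Import all_classical all_reals all_analysis.
Set Implicit Arguments. Unset Strict Implicit. Unset Printing Implicit Defensive.
Import Order.TTheory GRing.Theory Num.Theory.
Import numFieldNormedType.Exports.
Local Open Scope classical_set_scope.
Local Open Scope ring_scope.

(* Populations are indexed by d : 'I_D, standing for degree d.+1 in {1,...,D}.
   Population d has nn d strategies, indexed by i : 'I_(nn d) (0-based). *)

Definition idx (D : nat) (nn : 'I_D -> nat) : finType := {d : 'I_D & 'I_(nn d)}.

Definition nS (D : nat) (nn : 'I_D -> nat) : nat := #|{: idx nn}|.

(* position in R^n of coordinate x^d_i *)
Definition pos (D : nat) (nn : 'I_D -> nat) (d : 'I_D) (i : 'I_(nn d)) : 'I_(nS nn) :=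
  enum_rank (Tagged (fun d => 'I_(nn d)) i : idx nn).

Definition xc (R : realType) (D : nat) (nn : 'I_D -> nat) (x : 'rV[R]_(nS nn))
  (d : 'I_D) (i : 'I_(nn d)) : R := x ord0 (pos i).

Definition ev (R : realType) (n : nat) (j : 'I_n) : 'rV[R]_n := delta_mx 0 j.

Definition deg (R : realType) (D : nat) (d : 'I_D) : R := (d.+1)%:R.

Definition dbar (R : realType) (D : nat) (m : 'I_D -> R) : R := \sum_d deg R d * m d.

Definition theta (R : realType) (D : nat) (nn : 'I_D -> nat)
  (lam : R) (s : forall d, 'I_(nn d) -> R) (d : 'I_D) (i : 'I_(nn d)) : R :=
  lam * deg R d * (1 - s d i).

Definition Hfun (R : realType) (D : nat) (nn : 'I_D -> nat) (m : 'I_D -> R)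
  (s : forall d, 'I_(nn d) -> R) (lam gam : R) (Th : R) (x : 'rV[R]_(nS nn)) : R :=
  (dbar m)^-1 * (\sum_d deg R d *
      \sum_(i < nn d) (xc x i * theta lam s i / (gam + theta lam s i * Th))) - 1.

Definition social_state (R : realType) (D : nat) (nn : 'I_D -> nat) (m : 'I_D -> R)
  (x : 'rV[R]_(nS nn)) : Prop :=
  (forall d (i : 'I_(nn d)), 0 <= xc x i) /\ (forall d, \sum_(i < nn d) xc x i = m d).

Definition C1_on (R : realType) (n : nat) (f : 'rV[R]_n -> R) (N : set 'rV[R]_n) : Prop :=
  forall j : 'I_n,
    (forall y, N y -> derivable f y (ev R j)) /\
    {within N, continuous (fun y => derive f y (ev R j))}.

Definition implicit_sol (R : realType) (D : nat) (nn : 'I_D -> nat) (m : 'I_D -> R)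
  (s : forall d, 'I_(nn d) -> R) (lam gam : R) (xs : 'rV[R]_(nS nn)) (Ths : R)
  (N : set 'rV[R]_(nS nn)) (h : 'rV[R]_(nS nn) -> R) : Prop :=
  [/\ open N, N xs, C1_on h N, h xs = Ths &
      forall y, N y -> 0 < h y /\ Hfun m s lam gam (h y) y = 0].

Definition Fpay (R : realType) (D : nat) (nn : 'I_D -> nat)
  (s : forall d, 'I_(nn d) -> R) (lam gam r : R) (h : 'rV[R]_(nS nn) -> R)
  (d : 'I_D) (i : 'I_(nn d)) (y : 'rV[R]_(nS nn)) : R :=
  s d i * r - (1 - s d i) * (theta lam s i * h y / (gam + theta lam s i * h y)).

From HB Require Import structures.
From mathcomp Require Import all_boot all_order all_algebra.
From mathcomp Require Import all_classical all_reals all_analysis.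
From mathcomp Require Import ring lra.
Import Order.TTheory GRing.Theory Num.Theory.
Import numFieldNormedType.Exports.
Local Open Scope classical_set_scope.
Local Open Scope ring_scope.

(* Write  G(T, y) = sum_d d sum_i y^d_i theta^d_i / (gamma + theta^d_i T),  so that
   H(T, y) = G(T, y) / dbar - 1.  Everything rests on one algebraic identity:
       G(a, y) - G(b, y) = (b - a) Q(a, b, y),
       Q(a, b, y) = sum_d d sum_i y^d_i theta^2 / ((gamma + theta a)(gamma + theta b)),
   where Q is linear in y and, near a state with some coordinate x^d0_i0 > 0
   (theta^d0_i0 > 0), bounded below by a positive constant uniformly in a, b >= 0.
   Consequently:
   - dH/dTheta (Ths, xs) = - Q(Ths, Ths, xs) / dbar < 0;
   - on a small ball around xs, G(., y) takes the value dbar at exactly one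
     T in (0, 2 Ths] (intermediate value theorem + the identity): this defines h,
     which is locally Lipschitz, and whose directional derivatives are
     dh(y) v = G(h y, v) / Q(h y, h y, y); any other solution agrees with h near xs;
   - by the chain rule, dF^d_k / dx^c_l (xs) = - A_k B_l with
     A_k = gamma/(lam d) (theta_k / (gamma + theta_k Ths))^2  and
     B_l = c theta_l / (gamma + theta_l Ths) / Q(Ths, Ths, xs), both nonnegative and
     nonincreasing in the strategy index (theta decreases as s increases), so every
     mixed second difference  -(A_k' - A_k)(B_l' - B_l)  is nonpositive.
   The file first proves generic facts on directional derivatives, then the weighted
   sums G and Q, the local construction of h, the derivative of the payoffs, and
   finally assembles the theorem. *)

Lemma normr_coord_le {R : realType} {n : nat} (v : 'rV[R]_n) (j : 'I_n) : `|v ord0 j| <= `|v|.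
Proof.
have -> : `|v| = mx_norm v by [].
rewrite mx_normrE.
exact: (le_bigmax _ (fun ij : 'I_1 * 'I_n => `|v ij.1 ij.2|) (ord0, j)).
Qed.

Lemma derive_from_quotient {R : realType} {V : normedModType R} {f : V -> R} {a v : V}
    {k : R -> R} {l : R} :
  (\forall t \near 0^', t^-1 *: ((f \o shift a) (t *: v) - f a) = k t) ->
  k @ 0^' --> l -> derivable f a v /\ derive f a v = l.
Proof.
move=> hk hl.
have hq : (fun t => t^-1 *: ((f \o shift a) (t *: v) - f a)) @ 0^' --> l.
  by apply: cvg_trans hl; apply: near_eq_cvg; near=> t; rewrite (near hk t).
by split; [apply/cvg_ex; exists l | exact: cvg_lim].
Unshelve. all: by end_near.
Qed.

Lemma cvg_line {R : realType} {V : normedModType R} (a v : V) :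
  (fun t : R => t *: v + a) @ 0^' --> a.
Proof.
apply: cvg_within_filter.
have h : (fun t : R => t *: v + a) @ (0 : R) --> (0 : R) *: v + a.
  by apply: cvgD; [apply: cvgZ; [exact: cvg_id | exact: cvg_cst] | exact: cvg_cst].
by rewrite scale0r add0r in h.
Qed.

Lemma near_line {R : realType} {V : normedModType R} {N : set V} {a : V} (v : V) :
  open N -> N a -> \forall t \near (0 : R)^', N (t *: v + a).
Proof. by move=> oN Na; have := cvg_line a v; move/(_ N); apply; apply: open_nbhs_nbhs. Qed.

Lemma derivable_cvg_line {R : realType} {V : normedModType R} {f : V -> R} {y v : V} :
  derivable f y v -> (fun t : R => f (t *: v + y)) @ 0^' --> f y.
Proof.
move=> /cvg_ex [l hl].
have e : \forall t \near (0:R)^',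
    f y + t * (t^-1 *: ((f \o shift y) (t *: v) - f y)) = f (t *: v + y).
  near=> t; have t0 : t != 0 by exact: (near (nbhs_dnbhs_neq 0) t).
  by rewrite /= /shift -[_ *: _]/(t^-1 * _) mulrA mulfV // mul1r addrC subrK.
apply: cvg_trans (near_eq_cvg e) _.
have h2 : (fun t : R => f y + t * (t^-1 *: ((f \o shift y) (t *: v) - f y)))
    @ 0^' --> f y + 0 * l.
  apply: cvgD; first exact: cvg_cst.
  by apply: cvgM => //; apply: cvg_within_filter; exact: cvg_id.
by rewrite mul0r addr0 in h2.
Unshelve. all: by end_near.
Qed.

Lemma lipschitz_at_cvg {R : realType} {V : normedModType R} {f : V -> R} {y : V} (C : R) :
  0 <= C -> (\forall z \near y, `|f z - f y| <= C * `|z - y|) -> f @ y --> f y.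
Proof.
move=> C0 hl; apply/cvgrPdist_le => e e0.
have hb : \forall z \near y, `|y - z| <= e / (C + 1).
  by apply: (cvgrPdist_le _ _).1 (@cvg_id _ (nbhs y)) _ _; apply: divr_gt0 => //; lra.
near=> z.
have hz : `|f z - f y| <= C * `|z - y| by exact: (near hl z).
have hyz : `|y - z| <= e / (C + 1) by exact: (near hb z).
rewrite distrC; apply: (le_trans hz).
apply: (@le_trans _ _ (C * (e / (C + 1)))); first by rewrite ler_wpM2l // distrC.
by rewrite mulrA ler_pdivrMr; nra.
Unshelve. all: by end_near.
Qed.

Lemma mixed_difference_le0 {R : realDomainType} {a a' b b' : R} :
  a' <= a -> b' <= b -> (- a') * b' - (- a) * b' - (- a') * b + (- a) * b <= 0.
Proof.
move=> ha hb.
have : 0 <= (a - a') * (b - b') by apply: mulr_ge0; rewrite subr_ge0.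
lra.
Qed.

Lemma deg_gt0 (R : realType) {D : nat} (d : 'I_D) : 0 < deg R d.
Proof. by rewrite /deg ltr0n. Qed.

Lemma dbar_gt0 {R : realType} {D : nat} {m : 'I_D -> R} (d0 : 'I_D) :
  (forall d, 0 < m d) -> 0 < dbar m.
Proof.
move=> hm; rewrite /dbar (bigD1 d0) //= ltr_pwDl ?mulr_gt0 ?deg_gt0 //.
by apply: sumr_ge0 => d _; rewrite mulr_ge0 ?ltW ?deg_gt0.
Qed.

Lemma exists_occupied_strategy {R : realType} {D : nat} {nn : 'I_D -> nat}
    {m : 'I_D -> R} {x : 'rV[R]_(nS nn)} :
  (forall d, 0 < m d) -> \sum_d m d = 1 -> social_state m x ->
  exists d0 (i0 : 'I_(nn d0)), 0 < xc x i0.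
Proof.
move=> hm hsum [_ xsum].
have [d0 _] : exists d0 : 'I_D, True.
  case: (pickP (fun _ : 'I_D => true)) => [d _|h]; first by exists d.
  have : \sum_d m d = 0 by apply: big1 => d _; have := h d.
  by rewrite hsum => /eqP; rewrite oner_eq0.
exists d0; apply: contrapT => hn.
have : \sum_(i < nn d0) xc x i <= 0.
  by apply: sumr_le0 => i _; rewrite leNgt; apply/negP => hi; apply: hn; exists i.
by rewrite xsum leNgt hm.
Qed.

Section Model.
Variables (R : realType) (D : nat) (nn : 'I_D -> nat) (s : forall d, 'I_(nn d) -> R)
  (lam gam : R).
Hypotheses (lam0 : 0 < lam) (gam0 : 0 < gam)
  (s01 : forall (d : 'I_D) (i : 'I_(nn d)), 0 <= s d i <= 1).
Local Set Implicit Arguments.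
Local Unset Strict Implicit.

Local Notation vec := 'rV[R]_(nS nn).
Local Notation weight := (forall d : 'I_D, 'I_(nn d) -> R).
Local Notation th d i := (@theta R D nn lam s d i).

Definition wsum (y : vec) (w : weight) : R :=
  \sum_d deg R d * \sum_(i < nn d) (xc y i * w d i).

(* Its l1-type norm, bounding wsum y w by |y| times it. *)
Definition wnorm (w : weight) : R := \sum_d deg R d * \sum_(i < nn d) `|w d i|.

Definition gweight (T : R) : weight := fun d i => th d i / (gam + th d i * T).

(* The weights of the difference quotient of G:  theta^2 / ((gamma + theta a)(gamma + theta b)). *)
Definition qweight (a b : R) : weight :=
  fun d i => th d i * th d i / ((gam + th d i * a) * (gam + th d i * b)).

Definition Gfun (T : R) (y : vec) : R := wsum y (gweight T).
Definition Qfun (a b : R) (y : vec) : R := wsum y (qweight a b).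

Lemma theta_ge0 d i : 0 <= th d i.
Proof.
have [_ s1] := andP (s01 d i).
by apply: mulr_ge0; [rewrite mulr_ge0 ?ltW ?deg_gt0 | rewrite subr_ge0].
Qed.

Lemma den_gt0 d i T : 0 <= T -> 0 < gam + th d i * T.
Proof. by move=> T0; rewrite ltr_pwDl // mulr_ge0 // theta_ge0. Qed.

Lemma theta_le d i : th d i <= lam * D%:R.
Proof.
have [s0 s1] := andP (s01 d i).
rewrite /theta -[X in _ <= X]mulr1 ler_pM //.
- by rewrite mulr_ge0 ?ltW ?deg_gt0.
- by rewrite subr_ge0.
- by rewrite ler_pM2l // /deg ler_nat.
- by rewrite lerBlDr lerDl.
Qed.

Lemma wsumB y w1 w2 : wsum y w1 - wsum y w2 = wsum y (fun d i => w1 d i - w2 d i).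
Proof.
rewrite /wsum -sumrB; apply: eq_bigr => d _; rewrite -mulrBr -sumrB.
by congr (_ * _); apply: eq_bigr => i _; rewrite mulrBr.
Qed.

Lemma wsumMl y c w : wsum y (fun d i => c * w d i) = c * wsum y w.
Proof.
rewrite /wsum mulr_sumr; apply: eq_bigr => d _.
rewrite [RHS]mulrCA [in RHS]mulr_sumr.
by congr (_ * _); apply: eq_bigr => i _; rewrite mulrCA.
Qed.

Lemma wsumBl y z w : wsum (y - z) w = wsum y w - wsum z w.
Proof.
rewrite /wsum -sumrB; apply: eq_bigr => d _; rewrite -mulrBr -sumrB.
by congr (_ * _); apply: eq_bigr => i _; rewrite /xc !mxE mulrBl.
Qed.

Lemma wsumZl y (c : R) w : wsum (c *: y) w = c * wsum y w.
Proof.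
rewrite /wsum mulr_sumr; apply: eq_bigr => d _.
rewrite [RHS]mulrCA [in RHS]mulr_sumr.
by congr (_ * _); apply: eq_bigr => i _; rewrite /xc !mxE mulrA.
Qed.

Lemma wnorm_ge0 w : 0 <= wnorm w.
Proof.
by apply: sumr_ge0 => d _; apply: mulr_ge0; [exact/ltW/deg_gt0 | apply: sumr_ge0].
Qed.

Lemma wsum_bound y w : `|wsum y w| <= `|y| * wnorm w.
Proof.
rewrite /wsum /wnorm mulr_sumr; apply: (le_trans (ler_norm_sum _ _ _)).
apply: ler_sum => d _; rewrite normrM gtr0_norm ?deg_gt0 // mulrCA.
rewrite ler_pM2l ?deg_gt0 // mulr_sumr; apply: (le_trans (ler_norm_sum _ _ _)).
by apply: ler_sum => i _; rewrite normrM ler_wpM2r ?normr_coord_le.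
Qed.

Lemma wsum_single y w (d0 : 'I_D) (i0 : 'I_(nn d0)) :
  (forall (d : 'I_D) (i : 'I_(nn d)), 0 <= xc y i * w d i) ->
  deg R d0 * (xc y i0 * w d0 i0) <= wsum y w.
Proof.
move=> h; rewrite /wsum (bigD1 d0) //= ler_wpDr //.
  by apply: sumr_ge0 => d _; apply: mulr_ge0; [exact/ltW/deg_gt0 | apply: sumr_ge0].
by rewrite ler_pM2l ?deg_gt0 // (bigD1 i0) //= ler_wpDr //; apply: sumr_ge0.
Qed.

Lemma wsum_ev (c : 'I_D) (l : 'I_(nn c)) w : wsum (ev R (pos l)) w = deg R c * w c l.
Proof.
have xc_ev d (i : 'I_(nn d)) : xc (ev R (pos l)) i = (pos i == pos l)%:R.
  by rewrite /xc /ev mxE.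
have tag_eq d (i : 'I_(nn d)) : pos i = pos l ->
    Tagged (fun d => 'I_(nn d)) i = Tagged (fun d => 'I_(nn d)) l.
  exact: enum_rank_inj.
rewrite /wsum (bigD1 c) //= [X in _ + X]big1 ?addr0; last first.
  move=> d dc; rewrite big1 ?mulr0 // => i _.
  rewrite xc_ev; case: eqP => [/tag_eq e|_]; last by rewrite mul0r.
  by have /= ec := congr1 tag e; rewrite ec eqxx in dc.
congr (_ * _); rewrite (bigD1 l) //= [X in _ + X]big1 ?addr0 ?xc_ev ?eqxx ?mul1r // => i il.
rewrite xc_ev; case: eqP => [/tag_eq e|_]; last by rewrite mul0r.
have : Tagged (fun d => 'I_(nn d)) i == Tagged (fun d => 'I_(nn d)) l by rewrite e.
by rewrite eq_Tagged /= (negbTE il).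
Qed.

Lemma Hfun_Gfun (m : 'I_D -> R) T y : Hfun m s lam gam T y = (dbar m)^-1 * Gfun T y - 1.
Proof.
rewrite /Hfun /Gfun /wsum /gweight; congr (_ * _ - _); apply: eq_bigr => d _.
by congr (_ * _); apply: eq_bigr => i _; rewrite mulrA.
Qed.

Lemma Gfun_diff a b y : 0 <= a -> 0 <= b -> Gfun a y - Gfun b y = (b - a) * Qfun a b y.
Proof.
move=> a0 b0; rewrite /Gfun /Qfun wsumB -wsumMl.
apply: eq_bigr => d _; congr (_ * _); apply: eq_bigr => i _; congr (_ * _).
have ha := den_gt0 i a0; have hb := den_gt0 i b0.
by rewrite /gweight /qweight; field; rewrite !gt_eqF.
Qed.

Lemma Gfun_solution_diff a b y z : 0 <= a -> 0 <= b -> Gfun a z = Gfun b y ->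
  (a - b) * Qfun a b z = Gfun b (z - y).
Proof.
move=> a0 b0 e; rewrite /Gfun wsumBl -/(Gfun b z) -/(Gfun b y) -e.
by rewrite -[RHS]opprB Gfun_diff // -mulNr opprB.
Qed.

Lemma gweight_ge0 T (d : 'I_D) (i : 'I_(nn d)) : 0 <= T -> 0 <= gweight T i.
Proof. by move=> T0; rewrite divr_ge0 ?theta_ge0 // ltW ?den_gt0. Qed.

Lemma qweight_ge0 a b (d : 'I_D) (i : 'I_(nn d)) : 0 <= a -> 0 <= b -> 0 <= qweight a b i.
Proof.
move=> a0 b0; apply: divr_ge0; first by rewrite mulr_ge0 ?theta_ge0.
by rewrite mulr_ge0 // ltW ?den_gt0.
Qed.

Lemma qweightE a b (d : 'I_D) (i : 'I_(nn d)) : qweight a b i = gweight a i * gweight b i.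
Proof. by rewrite /qweight /gweight mulf_div. Qed.

Lemma gweight_le_ref a (d d0 : 'I_D) (i : 'I_(nn d)) (i0 : 'I_(nn d0)) : 0 <= a -> 0 < th d0 i0 ->
  gweight a i <= (1 + lam * D%:R / th d0 i0) * gweight a i0.
Proof.
move=> a0 t0; have ha := den_gt0 i a0; have hb := den_gt0 i0 a0.
have -> : (1 + lam * D%:R / th d0 i0) * gweight a i0 =
    (th d0 i0 + lam * D%:R) / (gam + th d0 i0 * a).
  by rewrite /gweight; field; rewrite !gt_eqF.
rewrite /gweight ler_pdivrMr // mulrAC ler_pdivlMr //.
have h1 := theta_le i; have h2 := theta_ge0 i.
have h3 : 0 <= lam * D%:R by apply: mulr_ge0; [exact: ltW | exact: ler0n].
have p1 : 0 <= (lam * D%:R - th d i) * gam by apply: mulr_ge0; [rewrite subr_ge0 | exact: ltW].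
have p2 : 0 <= th d0 i0 * gam by apply: mulr_ge0; exact: ltW.
have p3 : 0 <= lam * D%:R * th d i * a by do 2 apply: mulr_ge0 => //.
nra.
Qed.

Lemma qweight_le_ref a b (d d0 : 'I_D) (i : 'I_(nn d)) (i0 : 'I_(nn d0)) :
  0 <= a -> 0 <= b -> 0 < th d0 i0 ->
  qweight a b i <= (1 + lam * D%:R / th d0 i0) ^+ 2 * qweight a b i0.
Proof.
move=> a0 b0 t0.
rewrite !qweightE expr2 [leRHS]mulrACA.
by apply: ler_pM; [exact: gweight_ge0 | exact: gweight_ge0 | |]; exact: gweight_le_ref.
Qed.

(* theta decreases, hence the G-weights decrease, along the strategy index. *)
Lemma gweight_antitone T (d : 'I_D) (k k' : 'I_(nn d)) :
  (forall (i j : 'I_(nn d)), (i < j)%N -> s d i < s d j) ->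
  nat_of_ord k' = (nat_of_ord k).+1 -> 0 <= T -> gweight T k' <= gweight T k.
Proof.
move=> hmono ek T0.
have hth : th d k' <= th d k.
  rewrite /theta; apply: ler_wpM2l; first by rewrite mulr_ge0 ?ltW ?deg_gt0.
  by rewrite lerD2l lerN2 ltW // hmono // ek.
have h1 := den_gt0 k T0; have h2 := den_gt0 k' T0; have h3 := theta_ge0 k'.
have : 0 <= (th d k - th d k') * gam by apply: mulr_ge0; [rewrite subr_ge0 | exact: ltW].
rewrite /gweight ler_pdivrMr // mulrAC ler_pdivlMr //; nra.
Qed.


Lemma gweight_antitone_T a a' (d : 'I_D) (i : 'I_(nn d)) :
  0 <= a -> a <= a' -> gweight a' i <= gweight a i.
Proof.
move=> a0 aa; have ha := den_gt0 i a0; have ha' := den_gt0 i (le_trans a0 aa).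
rewrite /gweight ler_pdivrMr // mulrAC ler_pdivlMr // ler_wpM2l ?theta_ge0 //.
by rewrite lerD2l ler_wpM2l ?theta_ge0.
Qed.

Lemma inv_den_cvg {U} (F : set_system U) {FF : Filter F} (f : U -> R) T
    (d : 'I_D) (i : 'I_(nn d)) :
  f @ F --> T -> 0 <= T -> (fun u => (gam + th d i * f u)^-1) @ F --> (gam + th d i * T)^-1.
Proof.
move=> hf T0; apply: cvgV; first by rewrite gt_eqF // den_gt0.
by apply: cvgD; [exact: cvg_cst | apply: cvgM; [exact: cvg_cst | exact: hf]].
Qed.

Lemma gweight_cvg {U} (F : set_system U) {FF : Filter F} (f : U -> R) T
    (d : 'I_D) (i : 'I_(nn d)) :
  f @ F --> T -> 0 <= T -> (fun u => gweight (f u) i) @ F --> gweight T i.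
Proof. by move=> hf T0; apply: cvgM; [exact: cvg_cst | exact: inv_den_cvg]. Qed.

Lemma wsum_cvg {U} (F : set_system U) {FF : Filter F} (Y : U -> vec) (W : U -> weight) y w :
  Y @ F --> y -> (forall d i, (fun u => W u d i) @ F --> w d i) ->
  (fun u => wsum (Y u) (W u)) @ F --> wsum y w.
Proof.
move=> hY hW; apply: cvg_big => //; first exact: add_continuous.
move=> d _; apply: cvgM; first exact: cvg_cst.
apply: cvg_big => //; first exact: add_continuous.
move=> i _; apply: cvgM => //.
exact: (cvg_comp _ _ hY (@coord_continuous R 1 (nS nn) ord0 (pos i) y)).
Qed.

Lemma Gfun_cvg {U} (F : set_system U) {FF : Filter F} (f : U -> R) (Y : U -> vec) T y :
  f @ F --> T -> Y @ F --> y -> 0 <= T -> (fun u => Gfun (f u) (Y u)) @ F --> Gfun T y.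
Proof. by move=> hf hY T0; apply: wsum_cvg => // d i; exact: gweight_cvg. Qed.

Lemma Qfun_cvg {U} (F : set_system U) {FF : Filter F} (f g : U -> R) (Y : U -> vec) a b y :
  f @ F --> a -> g @ F --> b -> Y @ F --> y -> 0 <= a -> 0 <= b ->
  (fun u => Qfun (f u) (g u) (Y u)) @ F --> Qfun a b y.
Proof.
move=> hf hg hY a0 b0; apply: wsum_cvg => // d i.
under eq_cvg do rewrite qweightE.
by rewrite qweightE; apply: cvgM; exact: gweight_cvg.
Qed.

Lemma Hfun_derive_Theta (m : 'I_D -> R) (T : R) (y : vec) : 0 < T ->
  is_derive T 1 (fun t => Hfun m s lam gam t y) (- (dbar m)^-1 * Qfun T T y).
Proof.
move=> T0.
have Nl := near_line (V := R) 1 (@open_gt R 0) T0.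
have hq : \forall t \near (0 : R)^',
    t^-1 *: (((fun t => Hfun m s lam gam t y) \o shift T) (t *: (1 : R)) - Hfun m s lam gam T y)
    = - (dbar m)^-1 * Qfun (t *: (1 : R) + T) T y.
  near=> t.
  have t0 : t != 0 by exact: (near (nbhs_dnbhs_neq 0) t).
  have z0 : 0 < t *: (1 : R) + T by exact: (near Nl t).
  rewrite /= /shift !Hfun_Gfun.
  have -> : (dbar m)^-1 * Gfun (t *: 1 + T) y - 1 - ((dbar m)^-1 * Gfun T y - 1) =
      (dbar m)^-1 * (Gfun (t *: 1 + T) y - Gfun T y) by ring.
  rewrite Gfun_diff ?ltW //.
  have scaleE (a b : R) : a *: b = a * b by [].
  rewrite !scaleE mulr1; move: (dbar m)^-1 => c.
  by field; rewrite t0.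
have hc : (fun t : R => - (dbar m)^-1 * Qfun (t *: (1 : R) + T) T y) @ 0^' -->
    - (dbar m)^-1 * Qfun T T y.
  apply: cvgM; first exact: cvg_cst.
  by apply: Qfun_cvg; rewrite ?ltW //; [exact: cvg_line | exact: cvg_cst | exact: cvg_cst].
by have [hd hv] := derive_from_quotient hq hc; constructor.
Unshelve. all: by end_near.
Qed.

Lemma implicit_derive (N : set vec) (h : vec -> R) c y v :
  open N -> (forall z, N z -> 0 < h z /\ Gfun (h z) z = c) ->
  (forall z a b, N z -> 0 <= a -> 0 <= b -> 0 < Qfun a b z) -> N y ->
  (fun t : R => h (t *: v + y)) @ 0^' --> h y ->
  derivable h y v /\ derive h y v = Gfun (h y) v / Qfun (h y) (h y) y.
Proof.
move=> oN hN QN Ny hc.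
have Nl := near_line v oN Ny.
have [hy0 hyc] := hN y Ny.
apply: (derive_from_quotient
  (k := fun t => Gfun (h y) v / Qfun (h (t *: v + y)) (h y) (t *: v + y))).
  near=> t.
  have Nt : N (t *: v + y) by exact: (near Nl t).
  have t0 : t != 0 by exact: (near (nbhs_dnbhs_neq 0) t).
  have [ht0 htc] := hN _ Nt.
  have q0 := QN _ _ _ Nt (ltW ht0) (ltW hy0).
  have := Gfun_solution_diff (ltW ht0) (ltW hy0) (etrans htc (esym hyc)).
  rewrite addrK /Gfun wsumZl -/(Gfun (h y) v) => e.
  by rewrite /= /shift -[Gfun (h y) v](mulKf t0) -e mulrA mulfK ?gt_eqF.
apply: cvgM; first exact: cvg_cst.
apply: cvgV; first by rewrite gt_eqF // QN // ltW.
by apply: Qfun_cvg; rewrite ?ltW //; [exact: cvg_cst | exact: cvg_line].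
Unshelve. all: by end_near.
Qed.

(* Chain rule for the payoff  F^d_k = s r - (1 - s) theta h / (gamma + theta h):
   since theta = lam d (1 - s), dF^d_k = - gamma / (lam d) (theta / (gamma + theta h))^2 dh. *)
Lemma payoff_derive r (N : set vec) (h : vec -> R) y v (d : 'I_D) (k : 'I_(nn d)) :
  open N -> (forall z, N z -> 0 <= h z) -> N y -> derivable h y v ->
  derive (Fpay s lam gam r h k) y v =
  - (gam / (lam * deg R d) * gweight (h y) k ^+ 2) * derive h y v.
Proof.
move=> oN hpos Ny hd.
have Nl := near_line v oN Ny.
have hy0 := hpos y Ny.
pose slope t := gam / (lam * deg R d) * (gweight (h (t *: v + y)) k * gweight (h y) k).
have hq : \forall t \near (0 : R)^',
    t^-1 *: ((Fpay s lam gam r h k \o shift y) (t *: v) - Fpay s lam gam r h k y) =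
    - slope t * (t^-1 *: ((h \o shift y) (t *: v) - h y)).
  near=> t.
  have t0 : t != 0 by exact: (near (nbhs_dnbhs_neq 0) t).
  have ht0 : 0 <= h (t *: v + y) by apply: hpos; exact: (near Nl t).
  have da := den_gt0 k ht0; have db := den_gt0 k hy0; have dg := deg_gt0 R d.
  rewrite /slope /gweight /Fpay /= /shift -![_ *: (_ - _)]/(_ * _).
  move: da db dg; set a := h (t *: v + y); set b := h y.
  rewrite /theta /deg -natr1 addrC => da db dg.
  by field; rewrite t0 !gt_eqF.
have hc : (fun t => - slope t * (t^-1 *: ((h \o shift y) (t *: v) - h y))) @ 0^' -->
    - (gam / (lam * deg R d) * gweight (h y) k ^+ 2) * derive h y v.
  apply: cvgM; last exact: hd.
  rewrite expr2; apply: cvgN; apply: cvgM; first exact: cvg_cst.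
  by apply: cvgM; [apply: gweight_cvg (derivable_cvg_line hd) hy0 | exact: cvg_cst].
by have [_ ->] := derive_from_quotient hq hc.
Unshelve. all: by end_near.
Qed.

Section ReferenceState.
(* A state xs with an occupied strategy i0 of population d0 whose theta is positive;
   every state near xs then has Q bounded below by a positive constant. *)
Local Unset Implicit Arguments.
Variables (xs : vec) (d0 : 'I_D) (i0 : 'I_(nn d0)).
Hypotheses (xs0 : forall (d : 'I_D) (i : 'I_(nn d)), 0 <= xc xs i)
  (hx0 : 0 < xc xs i0) (ht0 : 0 < th d0 i0).
Local Set Implicit Arguments.

(* Every weight is within the factor wratio^2 of the reference one. *)
Definition wratio : R := 1 + lam * D%:R / th d0 i0.
Definition degsum : R := \sum_d deg R d * (nn d)%:R.
(* The contribution of the reference strategy: Q(a, b, xs) >= cref qweight a b i0. *)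
Definition cref : R := deg R d0 * xc xs i0.

Lemma cref_gt0 : 0 < cref.
Proof. by rewrite /cref mulr_gt0 ?deg_gt0. Qed.

Lemma wratio_degsum_ge0 : 0 <= wratio ^+ 2 * degsum.
Proof.
have r0 : 0 <= lam * D%:R / th d0 i0.
  by apply: divr_ge0; [apply: mulr_ge0; [exact: ltW | exact: ler0n] | exact: ltW].
apply: mulr_ge0; first by apply: exprn_ge0; rewrite /wratio; lra.
by apply: sumr_ge0 => d _; apply: mulr_ge0; [exact/ltW/deg_gt0 | exact: ler0n].
Qed.

Lemma qweight_ref_gt0 a b : 0 <= a -> 0 <= b -> 0 < qweight a b i0.
Proof.
move=> a0 b0; rewrite qweightE.
by apply: mulr_gt0; apply: divr_gt0; rewrite ?den_gt0.
Qed.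

Lemma wnorm_qweight a b : 0 <= a -> 0 <= b ->
  wnorm (qweight a b) <= wratio ^+ 2 * qweight a b i0 * degsum.
Proof.
move=> a0 b0; rewrite /wnorm /degsum mulr_sumr; apply: ler_sum => d _.
rewrite mulrCA ler_pM2l ?deg_gt0 //.
apply: (@le_trans _ _ (\sum_(i < nn d) wratio ^+ 2 * qweight a b i0)).
  apply: ler_sum => i _; rewrite ger0_norm ?qweight_ge0 //; exact: qweight_le_ref.
by rewrite sumr_const card_ord mulr_natr.
Qed.

Lemma Qfun_lb a b y : 0 <= a -> 0 <= b -> `|y - xs| * (wratio ^+ 2 * degsum) <= cref / 2 ->
  qweight a b i0 * (cref / 2) <= Qfun a b y.
Proof.
move=> a0 b0 hy.
have w0 := qweight_ref_gt0 a0 b0.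
have -> : Qfun a b y = Qfun a b xs + wsum (y - xs) (qweight a b).
  by rewrite /Qfun wsumBl addrC subrK.
have ref : cref * qweight a b i0 <= Qfun a b xs.
  rewrite /cref -mulrA; apply: wsum_single => d i.
  by rewrite mulr_ge0 ?qweight_ge0.
have err : `|wsum (y - xs) (qweight a b)| <= cref / 2 * qweight a b i0.
  apply: (le_trans (wsum_bound _ _)).
  apply: (le_trans (ler_wpM2l (normr_ge0 _) (wnorm_qweight a0 b0))).
  have -> : `|y - xs| * (wratio ^+ 2 * qweight a b i0 * degsum) =
    (`|y - xs| * (wratio ^+ 2 * degsum)) * qweight a b i0 by ring.
  by rewrite ler_wpM2r // ltW.
have := ler_norm (- wsum (y - xs) (qweight a b)); rewrite normrN.
have := cref_gt0; lra.
Qed.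

Section Construction.
Local Unset Implicit Arguments.
Variables (Ths : R).
Hypotheses (Ths0 : 0 < Ths).
Local Set Implicit Arguments.

(* Roots near xs are searched in (0, Tmax]. *)
Definition Tmax : R := Ths *+ 2.
Definition level : R := Gfun Ths xs.
(* Lower bound on |G(T, y) - level| at the endpoints 0 and Tmax. *)
Definition gap : R := Ths * qweight Tmax Ths i0 * (cref / 2).
(* Lower bound for Q(a, b, y) on the ball when a, b <= Tmax. *)
Definition qmin : R := qweight Tmax Tmax i0 * (cref / 2).
(* The ball on which h is constructed: both smallness conditions of ballN_small hold. *)
Definition radius : R :=
  Num.min (cref / 2 / (wratio ^+ 2 * degsum + 1)) (gap / (wnorm (gweight Ths) + 1)).
Definition ballN : set vec := ball xs radius.

Lemma Tmax_ge0 : 0 <= Tmax.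
Proof. by rewrite /Tmax mulrn_wge0 // ltW. Qed.

Lemma gap_gt0 : 0 < gap.
Proof.
have hq := qweight_ref_gt0 Tmax_ge0 (ltW Ths0).
have hc : 0 < cref / 2 by rewrite divr_gt0 ?cref_gt0.
by rewrite /gap; apply: mulr_gt0 => //; apply: mulr_gt0.
Qed.

Lemma qmin_gt0 : 0 < qmin.
Proof.
have hq := qweight_ref_gt0 Tmax_ge0 Tmax_ge0.
have hc : 0 < cref / 2 by rewrite divr_gt0 ?cref_gt0.
exact: mulr_gt0.
Qed.

Lemma radius_gt0 : 0 < radius.
Proof.
rewrite /radius lt_min; apply/andP; split.
  by rewrite !divr_gt0 ?cref_gt0 // ltr_pwDr // wratio_degsum_ge0.
by rewrite divr_gt0 ?gap_gt0 // ltr_pwDr // wnorm_ge0.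
Qed.

Lemma ballN_open : open ballN.
Proof. exact: ball_open. Qed.

Lemma ballN_xs : ballN xs.
Proof. exact: ballxx radius_gt0. Qed.

Lemma ballN_small y : ballN y ->
  `|y - xs| * (wratio ^+ 2 * degsum) <= cref / 2 /\ `|y - xs| * wnorm (gweight Ths) < gap.
Proof.
rewrite /ballN -ball_normE /= distrC => hy.
have h1 := wratio_degsum_ge0; have h2 := wnorm_ge0 (gweight Ths).
have [r1 r2] : radius <= cref / 2 / (wratio ^+ 2 * degsum + 1) /\
    radius <= gap / (wnorm (gweight Ths) + 1) by rewrite /radius !ge_min !lexx orbT.
split.
  apply: (@le_trans _ _ (cref / 2 / (wratio ^+ 2 * degsum + 1) * (wratio ^+ 2 * degsum))).
    by rewrite ler_wpM2r // ltW // (lt_le_trans hy r1).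
  rewrite mulrAC ler_pdivrMr ?ltr_pwDr // ler_wpM2l ?lerDl //.
  by rewrite divr_ge0 // ltW // cref_gt0.
apply: (@le_lt_trans _ _ (gap / (wnorm (gweight Ths) + 1) * wnorm (gweight Ths))).
  by rewrite ler_wpM2r // ltW // (lt_le_trans hy r2).
by rewrite mulrAC ltr_pdivrMr ?ltr_pwDr // ltr_pM2l ?gap_gt0 // ltrDl.
Qed.

Lemma ballN_Qpos y a b : ballN y -> 0 <= a -> 0 <= b -> 0 < Qfun a b y.
Proof.
move=> /ballN_small[hy _] a0 b0; apply: lt_le_trans (Qfun_lb a0 b0 hy).
by rewrite mulr_gt0 ?qweight_ref_gt0 ?divr_gt0 ?cref_gt0.
Qed.

Lemma ballN_unique y a b : ballN y -> 0 <= a -> 0 <= b -> Gfun a y = Gfun b y -> a = b.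
Proof.
move=> Ny a0 b0 e; have := Gfun_diff y a0 b0; rewrite e subrr.
move/esym/eqP; rewrite mulf_eq0 subr_eq0 => /orP[/eqP -> //|].
by rewrite gt_eqF // ballN_Qpos.
Qed.

Lemma Gfun_bracket y : ballN y -> Gfun Tmax y < level < Gfun 0 y.
Proof.
move=> Ny; have [hQ hP] := ballN_small Ny.
have T0 := ltW Ths0.
have e0 := Gfun_diff y (lexx 0) T0; have eM := Gfun_diff y Tmax_ge0 T0.
have eT : Ths - Tmax = - Ths by rewrite /Tmax mulr2n opprD addNKr.
rewrite eT mulNr in eM; rewrite subr0 in e0.
have eS : Gfun Ths y - level = Gfun Ths (y - xs) by rewrite /level /Gfun wsumBl.
have hb : `|Gfun Ths (y - xs)| <= `|y - xs| * wnorm (gweight Ths) by exact: wsum_bound.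
have q0 := Qfun_lb (lexx 0) T0 hQ; have qM := Qfun_lb Tmax_ge0 T0 hQ.
have wa : qweight Tmax Ths i0 <= qweight 0 Ths i0.
  by rewrite !qweightE ler_wpM2r ?gweight_ge0 ?gweight_antitone_T ?Tmax_ge0.
have c0 := cref_gt0.
have hw : gap <= Ths * (qweight 0 Ths i0 * (cref / 2)).
  by rewrite /gap -mulrA ler_wpM2l // ler_wpM2r // divr_ge0 // ltW.
have h0 : Ths * (qweight 0 Ths i0 * (cref / 2)) <= Ths * Qfun 0 Ths y by rewrite ler_wpM2l.
have hM : gap <= Ths * Qfun Tmax Ths y by rewrite /gap -mulrA ler_wpM2l.
have n1 := ler_norm (Gfun Ths (y - xs)).
have := ler_norm (- Gfun Ths (y - xs)); rewrite normrN => n2.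
apply/andP; split; lra.
Qed.

Lemma exists_root y : ballN y -> exists T, [/\ 0 < T, T <= Tmax & Gfun T y = level].
Proof.
move=> Ny; have /andP[gM g0] := Gfun_bracket Ny.
have [T hT eT] : exists2 T, T \in `[0, Tmax] & Gfun T y = level.
  apply: IVT; first exact: Tmax_ge0.
    apply: continuous_in_subspaceT => x /set_mem; rewrite /= in_itv /= => /andP[x0 _].
    exact: (Gfun_cvg (F := nbhs x) cvg_id (cvg_cst y) x0).
  by rewrite ge_min le_max (ltW gM) (ltW g0) orbT.
move: hT; rewrite in_itv /= => /andP[T0 TM]; exists T; split => //.
by rewrite lt_neqAle T0 andbT; apply/eqP => e; rewrite e eT ltxx in g0.
Qed.

Definition hsol (y : vec) : R := xget Ths [set T | 0 < T /\ Gfun T y = level].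

Lemma hsol_spec y : ballN y -> [/\ 0 < hsol y, hsol y <= Tmax & Gfun (hsol y) y = level].
Proof.
move=> Ny; have [T [T0 TM eT]] := exists_root Ny.
have [h0 he] : 0 < hsol y /\ Gfun (hsol y) y = level.
  by apply: (@xgetPex _ Ths [set T | 0 < T /\ Gfun T y = level]); exists T.
by rewrite (ballN_unique Ny (ltW h0) (ltW T0) (etrans he (esym eT))).
Qed.

Lemma hsol_sol y : ballN y -> 0 < hsol y /\ Gfun (hsol y) y = level.
Proof. by move=> /hsol_spec[]. Qed.

Lemma hsol_xs : hsol xs = Ths.
Proof.
have [h0 _ he] := hsol_spec ballN_xs.
exact: ballN_unique ballN_xs (ltW h0) (ltW Ths0) he.
Qed.

Lemma hsol_lipschitz y z : ballN y -> ballN z ->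
  `|hsol z - hsol y| <= wnorm (gweight (hsol y)) / qmin * `|z - y|.
Proof.
move=> Ny Nz.
have [hy0 hyM hye] := hsol_spec Ny; have [hz0 hzM hze] := hsol_spec Nz.
have e := Gfun_solution_diff (ltW hz0) (ltW hy0) (etrans hze (esym hye)).
have hq : qmin <= Qfun (hsol z) (hsol y) z.
  apply: le_trans (Qfun_lb (ltW hz0) (ltW hy0) (ballN_small Nz).1).
  apply: ler_wpM2r; first by rewrite divr_ge0 // ltW // cref_gt0.
  by rewrite !qweightE; apply: ler_pM; rewrite ?gweight_ge0 ?Tmax_ge0 // gweight_antitone_T // ltW.
have Qp := lt_le_trans qmin_gt0 hq.
rewrite mulrAC ler_pdivlMr ?qmin_gt0 //.
apply: (@le_trans _ _ (`|hsol z - hsol y| * Qfun (hsol z) (hsol y) z)).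
  by rewrite ler_wpM2l.
rewrite -(gtr0_norm Qp) -normrM e mulrC; exact: wsum_bound.
Qed.

Lemma hsol_cont y : ballN y -> hsol @ y --> hsol y.
Proof.
move=> Ny; apply: (lipschitz_at_cvg (wnorm (gweight (hsol y)) / qmin)).
  by rewrite divr_ge0 ?wnorm_ge0 // ltW // qmin_gt0.
have : \forall z \near y, ballN z by apply: open_nbhs_nbhs; split => //; exact: ballN_open.
by apply: filterS => z Nz; exact: hsol_lipschitz.
Qed.

Lemma hsol_derive y v : ballN y ->
  derivable hsol y v /\ derive hsol y v = Gfun (hsol y) v / Qfun (hsol y) (hsol y) y.
Proof.
move=> Ny; have hc := cvg_comp _ _ (cvg_line y v) (hsol_cont Ny).
exact: implicit_derive ballN_open hsol_sol (fun z a b Nz => ballN_Qpos Nz) Ny hc.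
Qed.

Lemma hsol_C1 : C1_on hsol ballN.
Proof.
move=> j; split => [y Ny|]; first by have [] := hsol_derive (ev R j) Ny.
rewrite continuous_open_subspace; last exact: ballN_open.
move=> y /set_mem Ny.
have NN : \forall z \near y, ballN z by apply: open_nbhs_nbhs; split => //; exact: ballN_open.
have e : \forall z \near y,
    Gfun (hsol z) (ev R j) / Qfun (hsol z) (hsol z) z = derive hsol z (ev R j).
  by apply: filterS NN => z Nz; have [_ ->] := hsol_derive (ev R j) Nz.
apply: cvg_trans (near_eq_cvg e) _.
have [_ ->] := hsol_derive (ev R j) Ny.
have [hy0 _] := hsol_sol Ny; have hc := hsol_cont Ny.
apply: cvgM; first exact: Gfun_cvg hc (cvg_cst _) (ltW hy0).
apply: cvgV; first by rewrite gt_eqF // ballN_Qpos // ltW.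
exact: (Qfun_cvg hc hc cvg_id (ltW hy0) (ltW hy0)).
Qed.

Section Game.
Local Unset Implicit Arguments.
Variables (m : 'I_D -> R).
Hypotheses (hm : forall d, 0 < m d) (hH : Hfun m s lam gam Ths xs = 0).
Local Set Implicit Arguments.

Lemma Hfun_root T y : Hfun m s lam gam T y = 0 <-> Gfun T y = dbar m.
Proof.
have c0 : dbar m != 0 by rewrite gt_eqF // (dbar_gt0 d0 hm).
rewrite Hfun_Gfun; split => [e|->]; last by rewrite mulVf // subrr.
move/eqP: e; rewrite subr_eq0 => /eqP e.
by rewrite -(mulVKf c0 (Gfun T y)) e mulr1.
Qed.

Lemma level_dbar : level = dbar m.
Proof. exact/Hfun_root. Qed.

Lemma dH_neg : exists dH, is_derive Ths 1 (fun t => Hfun m s lam gam t xs) dH /\ dH < 0.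
Proof.
exists (- (dbar m)^-1 * Qfun Ths Ths xs); split; first exact: Hfun_derive_Theta.
have Q0 := ballN_Qpos ballN_xs (ltW Ths0) (ltW Ths0).
by rewrite mulNr oppr_lt0 mulr_gt0 // invr_gt0 (dbar_gt0 d0 hm).
Qed.

Lemma implicit_exists : exists N h, implicit_sol m s lam gam xs Ths N h.
Proof.
exists ballN, hsol; split.
- exact: ballN_open.
- exact: ballN_xs.
- exact: hsol_C1.
- exact: hsol_xs.
- move=> y Ny; have [h0 he] := hsol_sol Ny.
  by split => //; apply/Hfun_root; rewrite he level_dbar.
Qed.

Lemma implicit_unique N h N' h' : implicit_sol m s lam gam xs Ths N h ->
  implicit_sol m s lam gam xs Ths N' h' -> \forall y \near xs, h' y = h y.
Proof.
move=> [oN Nx _ _ hN] [oN' Nx' _ _ hN'].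
have : \forall y \near xs, (N `&` N' `&` ballN) y.
  apply: open_nbhs_nbhs; split; first by apply: openI; [exact: openI | exact: ballN_open].
  by split; [split | exact: ballN_xs].
apply: filterS => y [[Ny Ny'] By].
have [h0 /Hfun_root e] := hN y Ny; have [h0' /Hfun_root e'] := hN' y Ny'.
by apply: ballN_unique By (ltW h0') (ltW h0) _; rewrite e e'.
Qed.

Lemma payoff_derive_xs N h r (d c : 'I_D) (k : 'I_(nn d)) (l : 'I_(nn c)) :
  implicit_sol m s lam gam xs Ths N h ->
  derive (Fpay s lam gam r h k) xs (ev R (pos l)) =
  - (gam / (lam * deg R d) * gweight Ths k ^+ 2) * (deg R c * gweight Ths l / Qfun Ths Ths xs).
Proof.
case=> oN Nx C1 hx hN.
have hd := (C1 (pos l)).1 xs Nx.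
have hpos z : N z -> 0 <= h z by move=> Nz; exact: ltW (hN z Nz).1.
rewrite (payoff_derive r k oN hpos Nx hd) hx; congr (_ * _).
have oN2 : open (N `&` ballN) by exact: openI oN ballN_open.
have hN2 z : (N `&` ballN) z -> 0 < h z /\ Gfun (h z) z = dbar m.
  by move=> [Nz _]; have [h0 /Hfun_root] := hN z Nz.
have QN2 z a b : (N `&` ballN) z -> 0 <= a -> 0 <= b -> 0 < Qfun a b z.
  by move=> [_ Nz]; exact: ballN_Qpos.
have [_ ->] := implicit_derive oN2 hN2 QN2 (conj Nx ballN_xs) (derivable_cvg_line hd).
by rewrite hx /Gfun wsum_ev.
Qed.

Lemma submodular N h r (d c : 'I_D) (k k' : 'I_(nn d)) (l l' : 'I_(nn c)) :
  (forall d (i j : 'I_(nn d)), (i < j)%N -> s d i < s d j) ->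
  implicit_sol m s lam gam xs Ths N h ->
  nat_of_ord k' = (nat_of_ord k).+1 -> nat_of_ord l' = (nat_of_ord l).+1 ->
  derive (Fpay s lam gam r h k') xs (ev R (pos l'))
  - derive (Fpay s lam gam r h k) xs (ev R (pos l'))
  - derive (Fpay s lam gam r h k') xs (ev R (pos l))
  + derive (Fpay s lam gam r h k) xs (ev R (pos l)) <= 0.
Proof.
move=> hmono sol ek el; rewrite !(payoff_derive_xs r _ _ sol).
have T0 := ltW Ths0; have Q0 := ballN_Qpos ballN_xs T0 T0.
apply: mixed_difference_le0.
  apply: ler_wpM2l; first by rewrite divr_ge0 ?mulr_ge0 ?ltW ?deg_gt0.
  by rewrite !expr2; apply: ler_pM; rewrite ?gweight_ge0 ?(gweight_antitone (hmono d)).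
apply: ler_wpM2r; first by rewrite invr_ge0 ltW.
by apply: ler_wpM2l; [exact/ltW/deg_gt0 | exact: gweight_antitone (hmono c) el T0].
Qed.

End Game.

End Construction.
End ReferenceState.
End Model.

Theorem theorem4 (R : realType) (D : nat) (nn : 'I_D -> nat) (m : 'I_D -> R)
  (s : forall d, 'I_(nn d) -> R) (lam gam r : R)
  (xs : 'rV[R]_(nS nn)) (Ths : R) :
  (forall d, 0 < m d <= 1) -> \sum_d m d = 1 ->
  (forall d (i : 'I_(nn d)), 0 <= s d i <= 1) ->
  (forall d (i j : 'I_(nn d)), (i < j)%N -> s d i < s d j) ->
  0 < lam -> 0 < gam -> r < 0 ->
  (forall d (i : 'I_(nn d)), gam < theta lam s i) ->
  social_state m xs ->
  (* Ths = \bar Theta(xs): the unique positive root of H(., xs) *)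
  0 < Ths -> Hfun m s lam gam Ths xs = 0 ->
  (* dH/dTheta (Ths, xs) < 0 *)
  (exists dH : R, is_derive Ths 1 (fun t => Hfun m s lam gam t xs) dH /\ dH < 0) /\
  (* existence of the implicit function *)
  (exists N h, implicit_sol m s lam gam xs Ths N h) /\
  (* its uniqueness (any two such functions agree near xs) *)
  (forall N h N' h', implicit_sol m s lam gam xs Ths N h ->
     implicit_sol m s lam gam xs Ths N' h' -> \forall y \near xs, h' y = h y) /\
  (* submodularity at xs *)
  (forall N h, implicit_sol m s lam gam xs Ths N h ->
   forall (d c : 'I_D) (k k' : 'I_(nn d)) (l l' : 'I_(nn c)),
     nat_of_ord k' = (nat_of_ord k).+1 -> nat_of_ord l' = (nat_of_ord l).+1 ->
     derive (Fpay s lam gam r h k') xs (ev R (pos l'))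
     - derive (Fpay s lam gam r h k) xs (ev R (pos l'))
     - derive (Fpay s lam gam r h k') xs (ev R (pos l))
     + derive (Fpay s lam gam r h k) xs (ev R (pos l)) <= 0).
Proof.
move=> hm hsum hs hmono lam0 gam0 _ hth xstate Ths0 hH.
have hm0 d : 0 < m d by case/andP: (hm d).
(* Some strategy is occupied at xs; its theta exceeds gamma > 0. *)
have [d0 [i0 hx0]] := exists_occupied_strategy hm0 hsum xstate.
have ht0 := lt_trans gam0 (hth d0 i0).
have [xs0 _] := xstate.
split; first exact: (dH_neg lam0 gam0 hs xs0 hx0 ht0 Ths0 hm0).
split; first exact: (implicit_exists lam0 gam0 hs xs0 hx0 ht0 Ths0 hm0 hH).
split; first exact: (implicit_unique lam0 gam0 hs xs0 hx0 ht0 Ths0 hm0).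
move=> N h sol d c k k' l l'.
exact: (submodular lam0 gam0 hs xs0 hx0 ht0 Ths0 hm0 r hmono sol).
Qed.
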